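(* Let $n=2k+1$ with $k$ a positive integer, and let $(\Gamma,+)$ be an abelian group of order $n$ with neutral element $e$ such that $\sum_{g\in\Gamma} g = e$ and $2g\neq e$ for all $g\in\Gamma\setminus\{e\}$. Let $p,q$ be two new symbols and let $P_n=(\Gamma\times(\Gamma\setminus\{e\}))\cup\{p,q\}$. Define the lines - $L_g=\{(h,g): h\in\Gamma\}$ for $g\in\Gamma\setminus\{e\}$; - $l_{p_g}=\{(g,h): h\in\Gamma\setminus\{e\}\}\cup\{p\}$ for $g\in\Gamma$; - $l_{q_g}=\{(h,h+g): h\in\Gamma,\ h+g\neq e\}\cup\{q\}$ for $g\in\Gamma$, and let $\mathcal{L}_n$ be the family of all these $3n-1$ lines. Then the linear system $\mathcal{C}_{n,n+1}=(P_n,\mathcal{L}_n)$ satisfies $\nu_2(\mathcal{C}_{n,n+1})=n+1$.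
   Context: A linear system is a pair $(P,\mathcal{L})$ with $P$ a finite set of points and $\mathcal{L}$ a family of subsets of $P$ (lines) such that any two distinct lines share at most one point. A 2-packing is a set $R$ of lines such that no three distinct lines of $R$ have a common point; $\nu_2$ denotes the maximum cardinality of a 2-packing. *)

From HB Require Import structures.
From mathcomp Require Import all_boot all_order all_algebra.
Set Implicit Arguments. Unset Strict Implicit. Unset Printing Implicit Defensive.
Import GRing.Theory.
Local Open Scope ring_scope.

Definition is_linear_system (T : finType) (P : {set T}) (L : {set {set T}}) : Prop :=
  (forall l, l \in L -> l \subset P) /\
  (forall l1 l2, l1 \in L -> l2 \in L -> l1 != l2 -> (#|l1 :&: l2| <= 1)%N).

Definition two_packing (T : finType) (R : {set {set T}}) : bool :=
  [forall l1 in R, forall l2 in R, forall l3 in R,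
     [&& l1 != l2, l1 != l3 & l2 != l3] ==> (l1 :&: l2 :&: l3 == set0)].

Definition nu2 (T : finType) (L : {set {set T}}) : nat :=
  \max_(R in powerset L | two_packing R) #|R|.

(* The construction C_{n,n+1}.  Points: inl (h,g) stands for (h,g) in
   Gamma x Gamma, inr true is the new symbol p, inr false is q. *)
Definition pt (G : finZmodType) : finType := ((G * G) + bool)%type.

Definition p_pt (G : finZmodType) : pt G := inr true.
Definition q_pt (G : finZmodType) : pt G := inr false.

Definition Pn (G : finZmodType) : {set pt G} :=
  [set x : pt G | match x with inl (h, g) => g != 0 | inr _ => true end].

Definition Lg (G : finZmodType) (g : G) : {set pt G} :=
  [set (inl (h, g) : pt G) | h : G].

Definition lp (G : finZmodType) (g : G) : {set pt G} :=
  [set (inl (g, h) : pt G) | h in [set h : G | h != 0]] :|: [set p_pt G].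

Definition lq (G : finZmodType) (g : G) : {set pt G} :=
  [set (inl (h, h + g) : pt G) | h in [set h : G | h + g != 0]] :|: [set q_pt G].

Definition Ln (G : finZmodType) : {set {set pt G}} :=
  [set Lg g | g in [set g : G | g != 0]] :|: [set lp g | g : G] :|: [set lq g | g : G].

From HB Require Import structures.
From mathcomp Require Import all_boot all_order all_algebra.
From mathcomp Require Import zify.
Import GRing.Theory.
Local Open Scope ring_scope.

Section TwoPackings.
Context {T : finType}.
Implicit Types (A B L R : {set {set T}}) (l : {set T}).

Lemma two_packingP R :
  reflect {in R & &, forall l1 l2 l3, [&& l1 != l2, l1 != l3 & l2 != l3] ->
             l1 :&: l2 :&: l3 = set0}
          (two_packing R).
Proof.
apply: (iffP forallP) => [tpR l1 l2 l3 R1 R2 R3 neq | tpR l1].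
  move: (tpR l1); rewrite R1 => /forall_inP/(_ l2 R2)/forall_inP/(_ l3 R3).
  by rewrite neq => /eqP.
apply/implyP => R1; apply/forall_inP => l2 R2; apply/forall_inP => l3 R3.
by apply/implyP => neq; rewrite tpR.
Qed.

Lemma two_packing_through {R} (x : T) :
  two_packing R -> (#|[set l in R | x \in l]| <= 2)%N.
Proof.
move=> /two_packingP tpR; rewrite leqNgt; apply/card_gt2P.
move=> [l1 [l2 [l3 [[] + + + [n12 n23 n31]]]]]; rewrite !inE.
move=> /andP[R1 x1] /andP[R2 x2] /andP[R3 x3].
have : x \in l1 :&: l2 :&: l3 by rewrite !inE x1 x2 x3.
by rewrite tpR ?inE // n12 n23 eq_sym n31.
Qed.

Lemma two_packing_setU A B :
  trivIset A -> trivIset B -> two_packing (A :|: B).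
Proof.
move=> /trivIsetP disjA /trivIsetP disjB.
apply/two_packingP => l1 l2 l3 R1 R2 R3 /and3P[n12 n13 n23].
apply/setP => x; rewrite !inE; apply/negP => /andP[/andP[x1 x2] x3].
have apart L l l' : {in L &, forall l l', l != l' -> [disjoint l & l']} ->
    l \in L -> l' \in L -> l != l' -> x \in l -> x \in l' -> False.
  by move=> disjL lL l'L nll' xl; rewrite (disjointFr (disjL l l' lL l'L nll') xl).
(* pigeonhole: two of the three lines lie in the same family *)
move: R1 R2 R3; rewrite !inE => /orP[] R1 /orP[] R2 /orP[] R3.
all: by [ apply: (apart A l1 l2) | apply: (apart A l1 l3) | apply: (apart A l2 l3)
        | apply: (apart B l1 l2) | apply: (apart B l1 l3) | apply: (apart B l2 l3) ].
Qed.

Lemma nu2_eq L R0 m :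
  (forall R, R \subset L -> two_packing R -> (#|R| <= m)%N) ->
  R0 \subset L -> two_packing R0 -> #|R0| = m -> nu2 L = m.
Proof.
move=> leR R0L tpR0 R0m; apply/eqP; rewrite eqn_leq; apply/andP; split.
  by apply/bigmax_leqP => R /andP[]; rewrite powersetE; exact: leR.
by rewrite -R0m; apply: leq_bigmax_cond; rewrite powersetE R0L.
Qed.

End TwoPackings.

Section Sumsets.
Context {G : finZmodType}.
Implicit Types (B C : {set G}) (b c : G).

Definition addset B C : {set G} := [set b + c | b in B, c in C].

Lemma addsetC B C : addset B C = addset C B.
Proof.
apply/setP => x; apply/imset2P/imset2P => -[b c Bb Cc ->]; exists c b => //; exact: addrC.
Qed.

Lemma card_translate b C : #|[set b + c | c in C]| = #|C|.
Proof. by apply: card_imset; apply: addrI. Qed.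

Lemma translate_sub_addset {b B} C : b \in B -> [set b + c | c in C] \subset addset B C.
Proof. by move=> Bb; apply/subsetP => _ /imsetP[c Cc ->]; apply/imset2P; exists b c. Qed.

Lemma leq_card_addsetr {b B} C : b \in B -> (#|C| <= #|addset B C|)%N.
Proof.
by move=> Bb; rewrite -(card_translate b); apply/subset_leq_card/translate_sub_addset.
Qed.

Lemma leq_card_addsetl {c} B {C} : c \in C -> (#|B| <= #|addset B C|)%N.
Proof. by rewrite addsetC; apply: leq_card_addsetr. Qed.

Lemma sum_translate b C :
  \sum_(x in [set b + c | c in C]) x = b *+ #|C| + \sum_(c in C) c.
Proof.
by rewrite big_imset /=; [rewrite big_split sumr_const | move=> c c' _ _ /addrI].
Qed.

Hypothesis no2torsion : forall g : G, g != 0 -> g + g != 0.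

(* Two translates b1 + C = b2 + C of C would have the same sum, which forces
   2 (b1 - b2) = 0. *)
Lemma card_addset_pairs {B C} : #|B| = 2 -> #|C| = 2 -> (3 <= #|addset B C|)%N.
Proof.
move=> /eqP/cards2P[b1 [b2 [nb12 defB]]] cardC; rewrite ltnNge; apply/negP => small.
have translate_full b : b \in B -> [set b + c | c in C] = addset B C.
  move=> Bb; apply/eqP; rewrite eqEcard translate_sub_addset //= card_translate cardC.
  exact: leq_trans small _.
have Bb1 : b1 \in B by rewrite defB !inE eqxx.
have Bb2 : b2 \in B by rewrite defB !inE eqxx orbT.
have /eqP := sum_translate b1 C.
rewrite translate_full // -(translate_full b2) // sum_translate cardC.
move=> /eqP/addIr eq_b12.
have : (b2 - b1) + (b2 - b1) == 0 by rewrite -mulr2n mulrnBl eq_b12 subrr.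
by apply/negP/no2torsion; rewrite subr_eq0 eq_sym.
Qed.

Lemma card_addset_small B C :
  (0 < #|B| <= 2)%N -> (0 < #|C| <= 2)%N -> (#|B| + #|C| <= #|addset B C| + 1)%N.
Proof.
move=> /andP[B0 B2] /andP[C0 C2].
have /card_gt0P[b Bb] := B0; have /card_gt0P[c Cc] := C0.
have := leq_card_addsetr C Bb; have := leq_card_addsetl B Cc.
have [[B_2 C_2]|] : (#|B| = 2 /\ #|C| = 2)%N \/ (#|B| = 1 \/ #|C| = 1)%N by lia.
  by have := card_addset_pairs B_2 C_2; lia.
lia.
Qed.

End Sumsets.

Section Construction.
Variable G : finZmodType.
Implicit Types (g h a b : G) (c : bool).

Lemma mem_Lg g a b : ((inl (a, b) : pt G) \in Lg g) = (b == g).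
Proof. by apply/imsetP/eqP => [[h _ [_ ->]] // | ->]; exists a. Qed.

Lemma mem_Lg_inr g c : ((inr c : pt G) \in Lg g) = false.
Proof. by apply/imsetP => -[]. Qed.

Lemma mem_lp g a b : ((inl (a, b) : pt G) \in lp g) = (a == g) && (b != 0).
Proof.
rewrite !inE orbF; apply/imsetP/andP => [[h] | [/eqP -> nzb]].
  by rewrite inE => nzh [-> ->].
by exists b; rewrite ?inE.
Qed.

Lemma mem_lp_inr g c : ((inr c : pt G) \in lp g) = c.
Proof. by rewrite !inE; case: imsetP => [[]|] //; case: c. Qed.

Lemma mem_lq g a b : ((inl (a, b) : pt G) \in lq g) = (b == a + g) && (b != 0).
Proof.
rewrite !inE orbF; apply/imsetP/andP => [[h] | [/eqP -> nzb]].
  by rewrite inE => nzh [-> ->].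
by exists a; rewrite ?inE.
Qed.

Lemma mem_lq_inr g c : ((inr c : pt G) \in lq g) = ~~ c.
Proof. by rewrite !inE; case: imsetP => [[]|] //; case: c. Qed.

Definition lineE := (mem_Lg, mem_Lg_inr, mem_lp, mem_lp_inr, mem_lq, mem_lq_inr).

Lemma LnP l :
  l \in Ln G -> [\/ exists2 g, g != 0 & l = Lg g, exists g, l = lp g | exists g, l = lq g].
Proof.
rewrite !inE => /orP[/orP[] | ] /imsetP[g]; rewrite ?inE => ? ->.
- by apply: Or31; exists g.
- by apply: Or32; exists g.
- by apply: Or33; exists g.
Qed.

Lemma Ln_sub_Pn l : l \in Ln G -> l \subset Pn G.
Proof.
case/LnP => [[g nzg ->] | [g ->] | [g ->]]; apply/subsetP => -[[a b] | c].
all: rewrite lineE inE //.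
- by move/eqP ->.
- by case/andP.
- by case/andP.
Qed.

Lemma setI_Lg g g' : g != g' -> Lg g :&: Lg g' = set0.
Proof.
move=> ng; apply/setP => -[[a b] | c]; rewrite in_setI !lineE in_set0 //.
by apply: contraNF ng => /andP[/eqP <- ->].
Qed.

Lemma setI_lp g g' : g != g' -> lp g :&: lp g' = [set p_pt G].
Proof.
move=> ng; apply/setP => -[[a b] | c]; rewrite in_setI !lineE in_set1 /p_pt /=; last by case: c.
by apply: contraNF ng => /and3P[/andP[/eqP <- _] /eqP ->].
Qed.

Lemma setI_lq g g' : g != g' -> lq g :&: lq g' = [set q_pt G].
Proof.
move=> ng; apply/setP => -[[a b] | c]; rewrite in_setI !lineE in_set1 /q_pt /=; last by case: c.
by apply: contraNF ng => /and3P[/andP[/eqP -> _] /eqP/addrI ->].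
Qed.

Lemma setI_Lg_lp g g' : Lg g :&: lp g' \subset [set inl (g', g)].
Proof.
apply/subsetP => -[[a b] | c]; rewrite in_setI !lineE in_set1 //.
by move=> /andP[/eqP -> /andP[/eqP -> _]].
Qed.

Lemma setI_Lg_lq g g' : Lg g :&: lq g' \subset [set inl (g - g', g)].
Proof.
apply/subsetP => -[[a b] | c]; rewrite in_setI !lineE in_set1 //.
by move=> /andP[/eqP -> /andP[/eqP -> _]]; rewrite addrK.
Qed.

Lemma setI_lp_lq g g' : lp g :&: lq g' \subset [set inl (g, g + g')].
Proof.
apply/subsetP => -[[a b] | []]; rewrite in_setI !lineE in_set1 //.
by move=> /and3P[/andP[/eqP -> _] /eqP -> _].
Qed.

Lemma Ln_setI_le1 l1 l2 : l1 \in Ln G -> l2 \in Ln G -> l1 != l2 -> (#|l1 :&: l2| <= 1)%N.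
Proof.
have le1 (A : {set pt G}) x : A \subset [set x] -> (#|A| <= 1)%N.
  by move/subset_leq_card; rewrite cards1.
move=> /LnP[[g _ ->] | [g ->] | [g ->]] /LnP[[g' _ ->] | [g' ->] | [g' ->]] neq.
- by rewrite setI_Lg ?cards0 //; apply: contraNneq neq => ->.
- exact: le1 (setI_Lg_lp g g').
- exact: le1 (setI_Lg_lq g g').
- by rewrite setIC; apply: le1 (setI_Lg_lp g' g).
- by rewrite setI_lp ?cards1 //; apply: contraNneq neq => ->.
- exact: le1 (setI_lp_lq g g').
- by rewrite setIC; apply: le1 (setI_Lg_lq g' g).
- by rewrite setIC; apply: le1 (setI_lp_lq g' g).
- by rewrite setI_lq ?cards1 //; apply: contraNneq neq => ->.
Qed.

Lemma Ln_linear_system : is_linear_system (Pn G) (Ln G).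
Proof. by split; [exact: Ln_sub_Pn | exact: Ln_setI_le1]. Qed.

Lemma Lg_neq_lp g g' : Lg g != lp g'.
Proof. by apply/eqP => /setP/(_ (p_pt G)); rewrite !lineE. Qed.

Lemma Lg_neq_lq g g' : Lg g != lq g'.
Proof. by apply/eqP => /setP/(_ (q_pt G)); rewrite !lineE. Qed.

Lemma lp_neq_lq g g' : lp g != lq g'.
Proof. by apply/eqP => /setP/(_ (p_pt G)); rewrite !lineE. Qed.

Lemma Lg_inj : injective (@Lg G).
Proof. by move=> g g' /setP/(_ (inl (0, g))); rewrite !lineE eqxx => /esym/eqP. Qed.

Lemma exists_nonzero : (1 < #|G|)%N -> exists x : G, x != 0.
Proof.
case/card_gt1P => x [y [_ _ nxy]]; have [x0 | nzx] := eqVneq x 0; last by exists x.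
by exists y; rewrite -x0 eq_sym.
Qed.

Lemma lp_inj : (1 < #|G|)%N -> injective (@lp G).
Proof.
case/exists_nonzero => x nzx g g' /setP/(_ (inl (g, x))).
by rewrite !lineE eqxx nzx /= andbT => /esym/eqP.
Qed.

Lemma lq_inj : (1 < #|G|)%N -> injective (@lq G).
Proof.
case/exists_nonzero => x nzx g g' /setP/(_ (inl (x - g, x))).
rewrite !lineE subrK eqxx nzx /= andbT => /esym/eqP.
by rewrite -{1}(subrK g x) => /addrI.
Qed.

Section UpperBound.
Hypothesis ntG : (1 < #|G|)%N.
Hypothesis no2torsion : forall g : G, g != 0 -> g + g != 0.
Variable R : {set {set pt G}}.
Hypotheses (RL : R \subset Ln G) (tpR : two_packing R).

Let X := @Lg G @^-1: R :\ 0.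
Let B := @lp G @^-1: R.
Let C := @lq G @^-1: R.

Lemma card_packing_le_sum : (#|R| <= #|X| + #|B| + #|C|)%N.
Proof.
have cover : R \subset @Lg G @: X :|: @lp G @: B :|: @lq G @: C.
  apply/subsetP => l Rl.
  have /LnP[[g nzg El] | [g El] | [g El]] := subsetP RL l Rl; subst l; rewrite !inE.
  - by rewrite imset_f ?inE ?nzg.
  - by rewrite imset_f ?inE ?orbT.
  - by rewrite imset_f ?inE ?orbT.
apply: leq_trans (subset_leq_card cover) _.
apply: leq_trans (leq_card_setU _ _) _; rewrite leq_add ?leq_imset_card //.
by apply: leq_trans (leq_card_setU _ _) _; rewrite leq_add ?leq_imset_card.
Qed.

Lemma card_packing_pencil_le2 (x : pt G) (f : G -> {set pt G}) :
  injective f -> (forall g, x \in f g) -> (#|f @^-1: R| <= 2)%N.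
Proof.
move=> injf xf; rewrite -(card_imset _ injf); apply: leq_trans _ (two_packing_through x tpR).
by apply/subset_leq_card/subsetP => _ /imsetP[g Rfg ->]; rewrite !inE in Rfg *; rewrite Rfg xf.
Qed.

Lemma packing_avoids_sums : X \subset ~: (0 |: addset B C).
Proof.
apply/subsetP => x; rewrite !inE => /andP[nzx RLx]; rewrite (negbTE nzx) /=.
apply/imset2P => -[b c]; rewrite !inE => Rlpb Rlqc xbc.
have distinct : [&& Lg x != lp b, Lg x != lq c & lp b != lq c].
  by rewrite Lg_neq_lp Lg_neq_lq lp_neq_lq.
have /two_packingP/(_ _ _ _ RLx Rlpb Rlqc distinct)/setP/(_ (inl (b, x))) := tpR.
by rewrite !in_setI !lineE -xbc !eqxx (negbTE nzx) in_set0.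
Qed.

Lemma card_packing_le : (#|R| <= #|G| + 1)%N.
Proof.
have B2 : (#|B| <= 2)%N by apply: card_packing_pencil_le2 (lp_inj ntG) (mem_lp_inr ^~ true).
have C2 : (#|C| <= 2)%N by apply: card_packing_pencil_le2 (lq_inj ntG) (mem_lq_inr ^~ false).
have sums_le : (#|addset B C| <= #|0%R |: addset B C|)%N by apply/subset_leq_card/subsetUr.
have sums_ge1 : (1 <= #|0%R |: addset B C|)%N by apply/card_gt0P; exists 0; rewrite !inE eqxx.
have compl : (#|X| + #|0%R |: addset B C| <= #|G|)%N.
  by rewrite -(cardsC (0%R |: addset B C)) addnC leq_add2l subset_leq_card ?packing_avoids_sums.
have := card_packing_le_sum.
have [B0 | B_gt0] := posnP #|B|; first by lia.
have [C0 | C_gt0] := posnP #|C|; first by lia.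
by have := card_addset_small no2torsion B C; rewrite B_gt0 B2 C_gt0 C2; lia.
Qed.

End UpperBound.

Definition packing0 : {set {set pt G}} := @Lg G @: [set~ 0] :|: [set lp 0; lq 0].

Lemma packing0_sub_Ln : packing0 \subset Ln G.
Proof.
apply/subsetP => l; rewrite !inE => /orP[/imsetP[g nzg ->] | /orP[] /eqP ->].
- by rewrite imset_f ?inE // -in_setC1.
- by rewrite imset_f ?orbT.
- by rewrite imset_f ?orbT.
Qed.

Lemma disjoint_lp0_lq0 : [disjoint lp (0 : G) & lq 0].
Proof.
rewrite -setI_eq0; apply/eqP/setP => -[[a b] | []]; rewrite in_setI !lineE in_set0 //.
by rewrite addr0; case: (a =P 0) => [-> | _] //; case: (b =P 0).
Qed.

Lemma two_packing_packing0 : two_packing packing0.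
Proof.
apply: two_packing_setU; apply/trivIsetP => l l'.
  move=> /imsetP[g _ ->] /imsetP[g' _ ->] neq; rewrite -setI_eq0 setI_Lg //.
  by apply: contraNneq neq => ->.
rewrite !inE => /orP[] /eqP -> /orP[] /eqP -> //; rewrite ?eqxx // => _.
  exact: disjoint_lp0_lq0.
by rewrite disjoint_sym; exact: disjoint_lp0_lq0.
Qed.

Lemma card_packing0 : #|packing0| = (#|G| + 1)%N.
Proof.
have disj : @Lg G @: [set~ 0] :&: [set lp 0; lq 0] = set0.
  apply/setP => l; rewrite !inE; apply/negbTE/andP => -[/imsetP[g _ ->]].
  by rewrite (negbTE (Lg_neq_lp _ _)) (negbTE (Lg_neq_lq _ _)).
rewrite cardsU disj cards0 subn0 card_imset; last exact: Lg_inj.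
rewrite cards2 lp_neq_lq cardsC1.
have : (0 < #|G|)%N by apply/card_gt0P; exists 0.
by rewrite /=; lia.
Qed.

End Construction.

Theorem proposition3p2 (k : nat) (G : finZmodType) :
  (0 < k)%N ->
  #|G| = (2 * k + 1)%N ->
  \sum_(g : G) g = 0 ->
  (forall g : G, g != 0 -> g + g != 0) ->
  is_linear_system (Pn G) (Ln G) /\ nu2 (Ln G) = ((2 * k + 1) + 1)%N.
Proof.
move=> k_gt0 cardG _ no2torsion; split; first exact: Ln_linear_system.
have ntG : (1 < #|G|)%N by rewrite cardG; lia.
rewrite -cardG; apply: nu2_eq (packing0_sub_Ln G) (two_packing_packing0 G) (card_packing0 G).
exact: card_packing_le.
Qed.
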